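(* Let $f,g:[a;b]\to\mathbb{R}$ be two regulated functions. Let $[c;d]\subset[a;b]$, let $c=t_0<t_1<\ldots<t_n=d$ be any partition of $[c;d]$, and let $\xi_0=c$ and $\xi_1,\ldots,\xi_n$ be such that $t_{i-1}\le\xi_i\le t_i$ for $i=1,2,\ldots,n$. Let $\delta_{-1}:=\sup_{c\le t\le d}|f(t)-f(c)|$, and let $\delta_0\ge\delta_1\ge\ldots\ge\delta_r\ge0$ and $\varepsilon_0\ge\varepsilon_1\ge\ldots\ge\varepsilon_r\ge0$. Then \[ \left|\sum_{i=1}^{n}f(\xi_i)\left[g(t_i)-g(t_{i-1})\right]-f(c)\left[g(d)-g(c)\right]\right| \le\sum_{k=0}^{r}2^{k}\delta_{k-1}\cdot TV(g,[c;d],\varepsilon_k)+\sum_{k=0}^{r}2^{k}\varepsilon_k\cdot TV(f,[c;d],\delta_k)+n\delta_r\varepsilon_r. \]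
   Context: A function $h:[a;b]\to\mathbb{R}$ is regulated if the one-sided finite limits $\lim_{t\to a+}h(t)$, $\lim_{t\to b-}h(t)$ exist and, for every $x\in(a;b)$, both finite limits $\lim_{t\to x-}h(t)$ and $\lim_{t\to x+}h(t)$ exist. The total variation of $h$ on $[c;d]$ is $TV(h,[c;d],0)=\sup_n\sup_{c\le t_1<\dots<t_n\le d}\sum_{i=2}^{n}|h(t_i)-h(t_{i-1})|$. For $\delta\ge0$, the truncated variation of $h$ on $[c;d]$ is $TV(h,[c;d],\delta):=\inf\{TV(u,[c;d],0): \sup_{c\le t\le d}|h(t)-u(t)|\le\delta/2\}$; for regulated $h$ and $\delta>0$ it equals $\sup_n\sup_{c\le t_1<\dots<t_n\le d}\sum_{i=2}^{n}\max\{|h(t_i)-h(t_{i-1})|-\delta,0\}$. *)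

From HB Require Import structures.
From mathcomp Require Import all_boot all_order all_algebra.
From mathcomp Require Import all_classical all_reals all_analysis.
Set Implicit Arguments. Unset Strict Implicit. Unset Printing Implicit Defensive.
Import Order.TTheory GRing.Theory Num.Theory.
Import numFieldNormedType.Exports.
Local Open Scope classical_set_scope.
Local Open Scope ring_scope.

Definition regulated (R : realType) (h : R -> R) (a b : R) : Prop :=
  (exists l : R, h t @[t --> a^'+] --> l) /\
  (exists l : R, h t @[t --> b^'-] --> l) /\
  (forall x, a < x < b ->
     (exists l : R, h t @[t --> x^'-] --> l) /\ (exists l : R, h t @[t --> x^'+] --> l)).

Definition var_sum (R : realType) (h : R -> R) (s : seq R) : R :=
  \sum_(1 <= i < size s) `|h (nth 0 s i) - h (nth 0 s i.-1)|.

Definition TV0 (R : realType) (h : R -> R) (c d : R) : \bar R :=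
  ereal_sup [set (var_sum h s)%:E | s in
     [set s : seq R | sorted <%R s /\ all (fun t => c <= t <= d) s]].

Definition TV (R : realType) (h : R -> R) (c d delta : R) : \bar R :=
  ereal_inf [set TV0 u c d | u in
     [set u : R -> R | forall t, c <= t <= d -> `|h t - u t| <= delta / 2]].

(* Write S(F, H) := sum_i (F(xi_i) - F(c)) (H(t_i) - H(t_{i-1})); the left-hand
   side is |S(f, g)|.  Choose G within eps_0/2 of H and P within delta_0/2 of F,
   with variations close to TV(H, eps_0) and TV(F, delta_0).  Then
   S(F, H) = S(F, G) + S(P, H - G) + S(F - P, H - G): the first term is at most
   delta_{-1} TV(G), the second, after Abel summation, at most eps_0 TV(P), and
   the last has the same shape with oscillations of F - P below delta_0 and
   increments of H - G below eps_0.  At levels e <= eps_0 the truncated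
   variation of H - G is at most TV(H, e) + TV(G) <= 2 TV(H, e) + slack, which
   produces the factors 2^k when the step is iterated r + 1 times; the final
   remainder is bounded termwise by n delta_r eps_r. *)

From HB Require Import structures.
From mathcomp Require Import all_boot all_order all_algebra.
From mathcomp Require Import all_classical all_reals all_analysis.
From mathcomp Require Import ring lra.
Import Order.TTheory GRing.Theory Num.Theory.
Import numFieldNormedType.Exports.
Local Open Scope classical_set_scope.
Local Open Scope ring_scope.
Set Implicit Arguments. Unset Strict Implicit. Unset Printing Implicit Defensive.

Lemma abel_summation (R : comPzRingType) (a b : nat -> R) n :
  \sum_(1 <= i < n.+1) (a i - a 0%N) * (b i - b i.-1) =
  \sum_(0 <= i < n) (b n - b i) * (a i.+1 - a i).
Proof.
elim: n => [|n IH]; first by rewrite !big_geq.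
rewrite big_nat_recr //= IH.
have -> : \sum_(0 <= i < n.+1) (b n.+1 - b i) * (a i.+1 - a i)
   = (b n.+1 - b n) * \sum_(0 <= i < n.+1) (a i.+1 - a i)
     + \sum_(0 <= i < n.+1) (b n - b i) * (a i.+1 - a i).
  by rewrite mulr_sumr -big_split /=; apply: eq_bigr => i _; ring.
rewrite telescope_sumr // [in RHS]big_nat_recr //= subrr mul0r addr0; ring.
Qed.

Lemma lee_addgt0_scaled (R : realType) (x y : \bar R) (C : R) :
  (forall eta, 0 < eta -> (x <= y + (eta * C)%:E)%E) -> (x <= y)%E.
Proof.
move=> hxy; apply/lee_addgt0Pr => e e0.
have C1 : 0 < `|C| + 1 by rewrite ltr_wpDl.
apply: le_trans (hxy (e / (`|C| + 1)) (divr_gt0 e0 C1)) _.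
rewrite leeD2l // lee_fin mulrAC ler_pdivrMr //.
by rewrite ler_wpM2l ?(ltW e0) // (le_trans (ler_norm C)) // lerDl.
Qed.

Section TruncatedVariation.
Variables (R : realType) (c d : R).

Lemma var_sum_rcons (h : R -> R) (s : seq R) y : (0 < size s)%N ->
  var_sum h (rcons s y) = var_sum h s + `|h y - h (last 0 s)|.
Proof.
move=> s0; rewrite /var_sum size_rcons big_nat_recr //=.
congr (_ + _).
  apply: eq_big_nat => i /andP[_ hi].
  by rewrite !nth_rcons hi (leq_ltn_trans (leq_pred i) hi).
rewrite nth_rcons ltnn eqxx nth_rcons prednK // leqnn -nth_last.
by case: (size s) s0.
Qed.

Lemma TV0_ge0 (h : R -> R) : (0 <= TV0 h c d)%E.
Proof. by apply: ereal_sup_ubound; exists [::]; rewrite // /var_sum big_geq. Qed.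

Lemma sum_var_le_TV0 (h : R -> R) (x : nat -> R) m :
  (forall i, (i < m)%N -> x i <= x i.+1) ->
  (forall i, (i <= m)%N -> c <= x i <= d) ->
  ((\sum_(0 <= i < m) `|h (x i.+1) - h (x i)|)%:E <= TV0 h c d)%E.
Proof.
move=> xinc xin.
(* TV0 only ranges over strictly increasing lists: repeated points are dropped. *)
suff [s [ss sa sl sv]] : exists s, [/\ sorted <%R (x 0%N :: s),
   all (fun t => c <= t <= d) (x 0%N :: s), last (x 0%N) s = x m &
   \sum_(0 <= i < m) `|h (x i.+1) - h (x i)| <= var_sum h (x 0%N :: s)].
  apply: (@le_trans _ _ (var_sum h (x 0%N :: s))%:E); first by rewrite lee_fin.
  by apply: ereal_sup_ubound; exists (x 0%N :: s).
elim: m xinc xin => [|m IH] xinc xin.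
  exists [::]; split => //=; first by rewrite xin.
  by rewrite big_geq // /var_sum big_geq.
have [s [ss sa sl sv]] := IH (fun i hi => xinc i (ltnW hi)) (fun i hi => xin i (leqW hi)).
have := xinc m (ltnSn m); rewrite le_eqVlt => /predU1P[e|lt].
  exists s; split => //; first by rewrite sl.
  by rewrite big_nat_recr //= e subrr normr0 addr0.
exists (rcons s (x m.+1)); split.
- by rewrite /= rcons_path; move: ss => /= ->; rewrite sl lt.
- by rewrite -rcons_cons all_rcons sa xin.
- by rewrite last_rcons.
- by rewrite -rcons_cons var_sum_rcons // big_nat_recr //= lerD // sl.
Qed.

Lemma TV0B (u v : R -> R) :
  (TV0 (fun x => (u x - v x)%R) c d <= TV0 u c d + TV0 v c d)%E.
Proof.
apply: ge_ereal_sup => _ [s hs <-].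
have -> : var_sum (fun x => u x - v x) s =
    \sum_(1 <= i < size s) `|(u (nth 0 s i) - u (nth 0 s i.-1))
                             - (v (nth 0 s i) - v (nth 0 s i.-1))|.
  by apply: eq_bigr => i _; congr `|_|; ring.
apply: (@le_trans _ _ ((var_sum u s)%:E + (var_sum v s)%:E)%E).
  by rewrite -EFinD lee_fin -big_split /= ler_sum // => i _; exact: ler_normB.
by apply: leeD; apply: ereal_sup_ubound; exists s.
Qed.

Lemma TV_ge0 (h : R -> R) e : (0 <= TV h c d e)%E.
Proof. by apply: le_ereal_inf_tmp => _ [u _ <-]; exact: TV0_ge0. Qed.

Lemma TV_antitone (h : R -> R) e e' : e <= e' -> (TV h c d e' <= TV h c d e)%E.
Proof.
move=> ee'; apply: ereal_inf_le_tmp => _ [u hu <-]; exists u => // t ht.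
by apply: le_trans (hu t ht) _; rewrite ler_pM2r // invr_gt0 ltr0n.
Qed.

Lemma TV_adherent (h : R -> R) e eta : 0 <= e -> 0 < eta ->
  exists u, (forall t, c <= t <= d -> `|h t - u t| <= e / 2) /\
            (TV0 u c d <= TV h c d e + eta%:E)%E.
Proof.
move=> e0 eta0.
have [hinf|hfin] := eqVneq (TV h c d e) +oo%E.
  exists h; split; last by rewrite hinf addye // leey.
  by move=> t _; rewrite subrr normr0 divr_ge0.
have hf : TV h c d e \is a fin_num.
  by rewrite fin_numE hfin andbT; apply/eqP => hh; have := TV_ge0 h e; rewrite hh.
have [_ [u hu <-] lt] := lb_ereal_inf_adherent eta0 hf.
by exists u; split => //; exact: ltW.
Qed.

Lemma TVB_TV0 (h v : R -> R) e : 0 <= e ->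
  (TV (fun x => (h x - v x)%R) c d e <= TV h c d e + TV0 v c d)%E.
Proof.
move=> e0; apply/lee_addgt0Pr => eta eta0.
have [u [hu hu2]] := TV_adherent h e0 eta0.
apply: (@le_trans _ _ (TV0 (fun x => u x - v x) c d)).
  apply: ereal_inf_lbound; exists (fun x => u x - v x) => // t ht.
  have -> : h t - v t - (u t - v t) = h t - u t by ring.
  exact: hu.
by apply: le_trans (TV0B u v) _; rewrite addeAC leeD2r.
Qed.

Lemma TV_split (h : R -> R) e0 eta : 0 <= e0 -> 0 < eta ->
  exists u, [/\ forall t, c <= t <= d -> `|h t - u t| <= e0 / 2,
    (TV0 u c d <= TV h c d e0 + eta%:E)%E &
    forall e, 0 <= e <= e0 ->
      (TV (fun x => (h x - u x)%R) c d e <= 2%:E * TV h c d e + eta%:E)%E].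
Proof.
move=> e00 eta0; have [u [hu hu2]] := TV_adherent h e00 eta0.
exists u; split => // e /andP[e_ge0 ee0].
apply: le_trans (TVB_TV0 h u e_ge0) _.
rewrite mule_natl mule2n -addeA leeD2l //.
by apply: le_trans hu2 _; rewrite leeD2r // TV_antitone.
Qed.

End TruncatedVariation.

Lemma homo_leq_upto (T : Type) (rel : T -> T -> Prop) (s : nat -> T) m :
  (forall x, rel x x) -> (forall y x z, rel x y -> rel y z -> rel x z) ->
  (forall k, (k < m)%N -> rel (s k) (s k.+1)) ->
  forall i j, (i <= j <= m)%N -> rel (s i) (s j).
Proof.
move=> rel_refl rel_trans hs i j /andP[ij jm].
have convex : {in [pred k | (k <= m)%N] &, forall x y k, (x < k < y)%N -> (k <= m)%N}.
  by move=> x y _ ym k /andP[_ ky]; exact: ltnW (leq_trans ky ym).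
apply: (homo_leq_in rel_refl rel_trans convex) => //=; last exact: leq_trans ij jm.
by move=> k _; exact: hs.
Qed.

Lemma antitone_ge0_upto (R : numDomainType) (s : nat -> R) m :
  (forall k, (k < m)%N -> s k.+1 <= s k) -> 0 <= s m ->
  forall i j, (i <= j <= m)%N -> 0 <= s j <= s i.
Proof.
move=> hs sm0 i j /andP[ij jm].
have le_s := @homo_leq_upto _ (fun x y => y <= x) s m lexx
  (fun _ _ _ yx zy => le_trans zy yx) hs.
by rewrite (le_trans sm0) ?le_s ?ij ?jm ?leqnn.
Qed.

(* [prepend x s] is the sequence x, s 0, s 1, ...; with x := delta_{-1} it turns
   delta into the weights delta_{k-1} of the estimate. *)
Definition prepend (R : Type) (x : R) (s : nat -> R) k :=
  if k is k'.+1 then s k' else x.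

Lemma prepend_shift (R : Type) (s : nat -> R) k : prepend (s 0%N) (s \o succn) k = s k.
Proof. by case: k. Qed.

Section RiemannStieltjes.
Variables (R : realType) (c d : R) (n : nat) (t xi : nat -> R).
Hypotheses (t0 : t 0%N = c) (tn : t n = d)
  (t_incr : forall i, (i < n)%N -> t i < t i.+1) (xi0 : xi 0%N = c)
  (xi_tag : forall i, (1 <= i <= n)%N -> t i.-1 <= xi i <= t i).

Definition rs_dev (F H : R -> R) :=
  \sum_(1 <= i < n.+1) (F (xi i) - F c) * (H (t i) - H (t i.-1)).

Lemma rs_sum_dev (f g : R -> R) :
  \sum_(1 <= i < n.+1) f (xi i) * (g (t i) - g (t i.-1)) - f c * (g d - g c)
  = rs_dev f g.
Proof.
have -> : g d - g c = \sum_(1 <= i < n.+1) (g (t i) - g (t i.-1)).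
  by rewrite big_add1 /= telescope_sumr // tn t0.
by rewrite mulr_sumr -sumrB; apply: eq_bigr => i _; ring.
Qed.

Lemma t_le i j : (i <= j <= n)%N -> t i <= t j.
Proof.
apply: (@homo_leq_upto _ (fun x y => x <= y)) => // [y x z|k k_lt].
  exact: le_trans.
exact/ltW/t_incr.
Qed.

Lemma t_in i : (i <= n)%N -> c <= t i <= d.
Proof. by move=> i_le; rewrite -t0 -tn !t_le ?leqnn ?andbT. Qed.

Lemma xi_in i : (i <= n)%N -> c <= xi i <= d.
Proof.
case: i => [|i] i_le; first by have := t_in (leq0n n); rewrite t0 xi0.
have /andP[h1 h2] := @xi_tag i.+1 i_le.
have /andP[ct _] := t_in (ltnW i_le); have /andP[_ td] := t_in i_le.
by rewrite (le_trans ct h1) (le_trans h2 td).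
Qed.

Lemma xi_le i : (i < n)%N -> xi i <= xi i.+1.
Proof.
move=> i_lt; have /andP[h1 _] := @xi_tag i.+1 i_lt.
apply: le_trans _ h1; case: i i_lt => [|i] i_lt; first by rewrite xi0 t0.
by have /andP[] := @xi_tag i.+1 (ltnW i_lt).
Qed.

Lemma rs_devBl F P H : rs_dev (fun x => F x - P x) H = rs_dev F H - rs_dev P H.
Proof. by rewrite /rs_dev -sumrB; apply: eq_bigr => i _; ring. Qed.

Lemma rs_devBr F H G : rs_dev F (fun x => H x - G x) = rs_dev F H - rs_dev F G.
Proof. by rewrite /rs_dev -sumrB; apply: eq_bigr => i _; ring. Qed.

Lemma rs_dev_le_TV0r F G D : 0 <= D ->
  (forall i, (1 <= i <= n)%N -> `|F (xi i) - F c| <= D) ->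
  ((`|rs_dev F G|)%:E <= D%:E * TV0 G c d)%E.
Proof.
move=> D0 hF.
apply: (@le_trans _ _ (D * \sum_(0 <= i < n) `|G (t i.+1) - G (t i)|)%:E).
  rewrite lee_fin /rs_dev big_add1 /= mulr_sumr.
  apply: le_trans (ler_norm_sum _ _ _) (ler_sum_nat _) => i /andP[_ i_lt].
  by rewrite normrM ler_wpM2r // hF.
rewrite EFinM lee_pmul // ?lee_fin ?sumr_ge0 //.
apply: sum_var_le_TV0 => i i_le; first exact/ltW/t_incr.
exact: t_in.
Qed.

Lemma rs_dev_le_TV0l P H E : 0 <= E ->
  (forall i, (i <= n)%N -> `|H d - H (t i)| <= E) ->
  ((`|rs_dev P H|)%:E <= E%:E * TV0 P c d)%E.
Proof.
move=> E0 hH.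
have -> : rs_dev P H = \sum_(0 <= i < n) (H d - H (t i)) * (P (xi i.+1) - P (xi i)).
  by rewrite -tn -(abel_summation (P \o xi) (H \o t)) /= xi0.
apply: (@le_trans _ _ (E * \sum_(0 <= i < n) `|P (xi i.+1) - P (xi i)|)%:E).
  rewrite lee_fin mulr_sumr.
  apply: le_trans (ler_norm_sum _ _ _) (ler_sum_nat _) => i /andP[_ i_lt].
  by rewrite normrM ler_wpM2r // hH // ltnW.
rewrite EFinM lee_pmul // ?lee_fin ?sumr_ge0 //.
apply: sum_var_le_TV0 => i i_le; first exact: xi_le.
exact: xi_in.
Qed.

Lemma rs_dev_le_increments F H D E :
  (forall i, (1 <= i <= n)%N -> `|F (xi i) - F c| <= D) ->
  (forall i, (1 <= i <= n)%N -> `|H (t i) - H (t i.-1)| <= E) ->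
  `|rs_dev F H| <= n%:R * D * E.
Proof.
move=> hF hH; apply: le_trans (ler_norm_sum _ _ _) _.
apply: le_trans (_ : \sum_(1 <= i < n.+1) (D * E) <= _).
  by apply: ler_sum_nat => i i_n; rewrite normrM ler_pM ?hF ?hH.
by rewrite sumr_const_nat subn1 -mulrA mulr_natl.
Qed.

Lemma rs_dev_step F H D dl0 ep0 eta : 0 <= D -> 0 <= dl0 -> 0 <= ep0 -> 0 < eta ->
  (forall i, (1 <= i <= n)%N -> `|F (xi i) - F c| <= D) ->
  exists F' H', [/\ forall i, (1 <= i <= n)%N -> `|F' (xi i) - F' c| <= dl0,
   forall i, (1 <= i <= n)%N -> `|H' (t i) - H' (t i.-1)| <= ep0,
   forall e, 0 <= e <= ep0 -> (TV H' c d e <= 2%:E * TV H c d e + eta%:E)%E,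
   forall e, 0 <= e <= dl0 -> (TV F' c d e <= 2%:E * TV F c d e + eta%:E)%E &
   ((`|rs_dev F H|)%:E <= D%:E * TV H c d ep0 + ep0%:E * TV F c d dl0
                          + (`|rs_dev F' H'| + (D + ep0) * eta)%:E)%E].
Proof.
move=> D0 dl00 ep00 eta0 hF.
have [G [hG TVG TVHG]] := TV_split c d H ep00 eta0.
have [P [hP TVP TVFP]] := TV_split c d F dl00 eta0.
have c_in : c <= c <= d by have := xi_in (leq0n n); rewrite xi0.
exists (fun x => F x - P x), (fun x => H x - G x); split => //.
- move=> i /andP[_ i_le] /=.
  have := hP _ (xi_in i_le); have := hP c c_in.
  move=> h1 h2; apply: le_trans (ler_normB _ _) _; lra.
- move=> i /andP[i_ge i_le] /=.
  have := hG _ (t_in i_le); have := hG _ (t_in (leq_trans (leq_pred i) i_le)).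
  move=> h1 h2; apply: le_trans (ler_normB _ _) _; lra.
have -> : rs_dev F H = rs_dev F G + rs_dev P (fun x => H x - G x)
    + rs_dev (fun x => F x - P x) (fun x => H x - G x).
  by rewrite rs_devBl !rs_devBr; ring.
have hHG i : (i <= n)%N -> `|(H d - G d) - (H (t i) - G (t i))| <= ep0.
  move=> i_le; have := hG _ (t_in i_le); have := hG _ (t_in (leqnn n)); rewrite tn.
  move=> h1 h2; apply: le_trans (ler_normB _ _) _; lra.
apply: le_trans (_ : (`|rs_dev F G|)%:E + (`|rs_dev P (fun x => H x - G x)|)%:E
    + (`|rs_dev (fun x => F x - P x) (fun x => H x - G x)|)%:E <= _)%E.
  by rewrite -!EFinD lee_fin (le_trans (ler_normD _ _)) // lerD2r ler_normD.
have hQ1 : ((`|rs_dev F G|)%:E <= D%:E * TV H c d ep0 + (D * eta)%:E)%E.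
  apply: le_trans (rs_dev_le_TV0r G D0 hF) _.
  by rewrite EFinM -muleDr ?fin_num_adde_defl //; apply: lee_wpmul2l; rewrite ?lee_fin.
have hQ2 : ((`|rs_dev P (fun x => H x - G x)|)%:E
            <= ep0%:E * TV F c d dl0 + (ep0 * eta)%:E)%E.
  apply: le_trans (rs_dev_le_TV0l P ep00 hHG) _.
  by rewrite EFinM -muleDr ?fin_num_adde_defl //; apply: lee_wpmul2l; rewrite ?lee_fin.
apply: le_trans (leeD (leeD hQ1 hQ2) (lexx _)) _.
by rewrite mulrDl !EFinD addeACA -[leLHS]addeA [X in (_ + X <= _)%E]addeC.
Qed.

(* The estimate after r approximation steps: TH and TF stand for the truncated
   variations of the integrator and the integrand, D bounds the oscillation of
   the integrand and, for r = 0, E bounds the increments of the integrator. *)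
Definition rs_bound (TH TF : R -> \bar R) (D E : R) (dl ep : nat -> R) r :=
  (\sum_(0 <= k < r) ((2 ^+ k * prepend D dl k)%:E * TH (ep k))
   + \sum_(0 <= k < r) ((2 ^+ k * ep k)%:E * TF (dl k))
   + (n%:R * prepend D dl r * prepend E ep r)%:E)%E.

Definition rs_weight (D : R) (dl ep : nat -> R) r :=
  \sum_(0 <= k < r) 2 ^+ k * (prepend D dl k + ep k).

Lemma rs_boundS TH TF D E dl ep r :
  rs_bound TH TF D E dl ep r.+1 =
  (D%:E * TH (ep 0%N) + (ep 0%N)%:E * TF (dl 0%N)
   + rs_bound (fun e => 2%:E * TH e) (fun e => 2%:E * TF e)
       (dl 0%N) (ep 0%N) (dl \o succn) (ep \o succn) r)%E.
Proof.
rewrite /rs_bound !big_nat_recl //= !prepend_shift !expr0 !mul1r.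
symmetry; rewrite addeACA -!addeA; congr (_ + (_ + _))%E.
  by under eq_bigr do rewrite prepend_shift muleA -EFinM mulrAC -exprSr.
rewrite addeCA; congr (_ + (_ + _))%E.
by under eq_bigr do rewrite muleA -EFinM mulrAC -exprSr.
Qed.

Lemma rs_bound_le TH TF TH' TF' D E dl ep r :
  (forall k, (k < r)%N -> 0 <= prepend D dl k) ->
  (forall k, (k < r)%N -> 0 <= ep k) ->
  (forall k, (k < r)%N -> (TH (ep k) <= TH' (ep k))%E) ->
  (forall k, (k < r)%N -> (TF (dl k) <= TF' (dl k))%E) ->
  (rs_bound TH TF D E dl ep r <= rs_bound TH' TF' D E dl ep r)%E.
Proof.
move=> hD hep hTH hTF; rewrite leeD2r // leeD //;
  rewrite big_nat_cond [in leRHS]big_nat_cond;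
  apply: lee_sum => k /andP[/andP[_ k_lt] _];
  by apply: lee_wpmul2l; rewrite ?lee_fin ?mulr_ge0 ?exprn_ge0 ?hD ?hep ?hTH ?hTF.
Qed.

Lemma rs_boundDr TH TF D E dl ep r eta :
  rs_bound (fun e => TH e + eta%:E)%E (fun e => TF e + eta%:E)%E D E dl ep r
  = (rs_bound TH TF D E dl ep r + (eta * rs_weight D dl ep r)%:E)%E.
Proof.
rewrite /rs_bound /rs_weight.
under eq_bigr do rewrite muleDr ?fin_num_adde_defl // -EFinM.
under [X in (_ + X + _)%E]eq_bigr do rewrite muleDr ?fin_num_adde_defl // -EFinM.
rewrite !big_split /= !sumEFin -!/(_ + _)%E addeACA (addeAC _ (_ + _)%E) -EFinD.
congr (_ + _%:E)%E.
by rewrite -big_split mulr_sumr /=; apply: eq_bigr => k _ /=; ring.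
Qed.

Lemma rs_dev_le_bound r : forall F H D E (dl ep : nat -> R), 0 <= D ->
  (forall i j, (i <= j < r)%N -> 0 <= dl j <= dl i) ->
  (forall i j, (i <= j < r)%N -> 0 <= ep j <= ep i) ->
  (forall i, (1 <= i <= n)%N -> `|F (xi i) - F c| <= D) ->
  (forall i, (1 <= i <= n)%N -> `|H (t i) - H (t i.-1)| <= E) ->
  ((`|rs_dev F H|)%:E <= rs_bound (TV H c d) (TV F c d) D E dl ep r)%E.
Proof.
elim: r => [|r IH] F H D E dl ep D0 hdl hep hF hH.
  by rewrite /rs_bound !big_geq // !add0e lee_fin rs_dev_le_increments.
have shift (s : nat -> R) : (forall i j, (i <= j < r.+1)%N -> 0 <= s j <= s i) ->
    forall i j, (i <= j < r)%N -> 0 <= s j.+1 <= s i.+1.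
  by move=> hs i j /andP[ij jr]; apply: hs; rewrite ltnS ij.
have [dl0 _] := andP (hdl 0%N 0%N isT); have [ep0 _] := andP (hep 0%N 0%N isT).
(* Each approximation costs eta times a weight independent of eta. *)
set w := rs_weight (dl 0%N) (dl \o succn) (ep \o succn) r.
apply: (@lee_addgt0_scaled _ _ _ (D + ep 0%N + w)) => eta eta0.
have [F' [H' [hF' hH' hTH hTF hstep]]] := rs_dev_step H D0 dl0 ep0 eta0 hF.
have hrest : ((`|rs_dev F' H'|)%:E <=
    rs_bound (fun e => 2%:E * TV H c d e) (fun e => 2%:E * TV F c d e)
      (dl 0%N) (ep 0%N) (dl \o succn) (ep \o succn) r
    + (eta * w)%:E)%E.
  rewrite -rs_boundDr.
  apply: le_trans (IH F' H' _ _ _ _ dl0 (shift _ hdl) (shift _ hep) hF' hH') _.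
  apply: rs_bound_le => k k_lt /=.
  - by rewrite prepend_shift; case/andP: (hdl 0%N k (ltnW k_lt)).
  - by case/andP: (hep 0%N k.+1 k_lt).
  - by apply: hTH; case/andP: (hep 0%N k.+1 k_lt) => -> ->.
  - by apply: hTF; case/andP: (hdl 0%N k.+1 k_lt) => -> ->.
apply: le_trans hstep _; rewrite rs_boundS EFinD -[leRHS]addeA leeD2l //.
apply: le_trans (leeD hrest (lexx _)) _.
by rewrite -addeA -EFinD (_ : _ + _ = eta * (D + ep 0%N + w)) //; ring.
Qed.

End RiemannStieltjes.

Unset Implicit Arguments.

Theorem lemma1 (R : realType) (f g : R -> R) (a b c d : R) (n r : nat)
    (t xi : nat -> R) (delta eps : nat -> R) :
  a < b ->
  regulated f a b -> regulated g a b ->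
  a <= c -> d <= b ->
  t 0%N = c -> t n = d -> (forall i, (i < n)%N -> t i < t i.+1) ->
  xi 0%N = c -> (forall i, (1 <= i <= n)%N -> t i.-1 <= xi i <= t i) ->
  (forall k, (k < r)%N -> delta k.+1 <= delta k) -> 0 <= delta r ->
  (forall k, (k < r)%N -> eps k.+1 <= eps k) -> 0 <= eps r ->
  let deltam1 := ereal_sup [set (`|f s - f c|)%:E | s in [set s | c <= s <= d]] in
  ((`| \sum_(1 <= i < n.+1) f (xi i) * (g (t i) - g (t i.-1)) - f c * (g d - g c) |)%:E
   <= \sum_(0 <= k < r.+1)
         ((2 ^+ k)%:E * (if k is k'.+1 then (delta k')%:E else deltam1) * TV g c d (eps k))
      + \sum_(0 <= k < r.+1) ((2 ^+ k * eps k)%:E * TV f c d (delta k))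
      + (n%:R * delta r * eps r)%:E)%E.
Proof.
move=> _ _ _ _ _ t0 tn t_incr xi0 xi_tag dl_anti dl_ge0 ep_anti ep_ge0.
cbv zeta; set deltam1 := ereal_sup _.
set D := \big[Num.max/0]_(1 <= i < n.+1) `|f (xi i) - f c|.
(* E only starts the induction: after r + 1 steps it has left the bound. *)
set E := \big[Num.max/0]_(1 <= i < n.+1) `|g (t i) - g (t i.-1)|.
have hD i : (1 <= i <= n)%N -> `|f (xi i) - f c| <= D.
  by move=> i_in; apply: (le_bigmax_seq _ i); rewrite ?mem_index_iota.
have hE i : (1 <= i <= n)%N -> `|g (t i) - g (t i.-1)| <= E.
  by move=> i_in; apply: (le_bigmax_seq _ i); rewrite ?mem_index_iota.
have D_le : (D%:E <= deltam1)%E.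
  rewrite /D big_seq; elim/big_ind: _ => [|x y|i].
  - apply: ereal_sup_ubound; exists c; rewrite ?subrr ?normr0 //=.
    by have := xi_in t0 tn t_incr xi0 xi_tag (leq0n n); rewrite xi0.
  - by rewrite EFin_max ge_max => -> ->.
  - rewrite mem_index_iota => i_in; apply: ereal_sup_ubound; exists (xi i) => //.
    exact: (xi_in t0 tn t_incr xi0 xi_tag (andP i_in).2).
have := rs_dev_le_bound t0 tn t_incr xi0 xi_tag (r := r.+1) (bigmax_ge_id _ _ _ _)
  (antitone_ge0_upto dl_anti dl_ge0) (antitone_ge0_upto ep_anti ep_ge0) hD hE.
rewrite -(rs_sum_dev xi t0 tn) => /le_trans; apply.
rewrite leeD2r // leeD2r //; apply: lee_sum => -[|k] _; last by rewrite EFinM.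
by rewrite expr0 mul1r mul1e; apply: lee_wpmul2r => //; exact: TV_ge0.
Qed.
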